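(* Consider the instance described in the context with any realization of $X_1,\dots,X_m$. For any allocation $\widehat{\mathcal{A}}$, if there exists a constant $K>0$ such that $$d_H\big(X_{[1:m/2]},\widehat X_{[1:m/2]}\big)>\frac m4-\frac{K\gamma\sqrt m}{2\epsilon}\quad\text{and}\quad\Big|\tfrac12\big(|\widehat A_\epsilon|-|\widehat B_\epsilon|\big)+V_\gamma\Big|\ge K\gamma\sqrt m,$$ then $\mathrm{Envy}(\widehat{\mathcal{A}})>0$.
   Context: Two agents $a,b$, $m$ items ($m$ a multiple of 4), additive utilities. Instance: binary $X_1,\dots,X_m$; for $i\le m/2$: if $X_i=1$ then $\mu^a_i=\frac12+\epsilon,\mu^b_i=\frac12-\epsilon$, if $X_i=0$ then $\mu^a_i=\frac12-\epsilon,\mu^b_i=\frac12+\epsilon$; for $i>m/2$: if $X_i=1$ then $\mu^a_i=\mu^b_i=\frac12+\gamma$, if $X_i=0$ then $\mu^a_i=\mu^b_i=\frac12-\gamma$; $\epsilon,\gamma\in(0,1/2]$. For an allocation $\widehat{\mathcal{A}}=(\widehat{\mathcal{A}}_a,\widehat{\mathcal{A}}_b)$ (partition of $[m]$): $\mathrm{Envy}_{a\to b}=\sum_{i\in\widehat{\mathcal{A}}_b}\mu^a_i-\sum_{i\in\widehat{\mathcal{A}}_a}\mu^a_i$, $\mathrm{Envy}_{b\to a}=\sum_{i\in\widehat{\mathcal{A}}_a}\mu^b_i-\sum_{i\in\widehat{\mathcal{A}}_b}\mu^b_i$, $\mathrm{Envy}=\max$ of the two. $\widehat X_i=1$ if $i\in\widehat{\mathcal{A}}_a$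 and $\widehat X_i=0$ otherwise; $\widehat A_\epsilon=\{i\le m/2:\widehat X_i=1\}$, $\widehat B_\epsilon=\{i\le m/2:\widehat X_i=0\}$; $S_i=1$ if $i\in\widehat{\mathcal{A}}_a$ and $S_i=-1$ otherwise; $V_\gamma=\sum_{i>m/2}S_i\mu^a_i$. $d_H$ is Hamming distance and $X_{[1:m/2]}=(X_1,\dots,X_{m/2})$. *)

(* items are indexed by 'I_m (0-based: item i+1 of the paper is
   ordinal i), values in an abstract R : rcfType (real closed, has Num.sqrt). *)
From mathcomp Require Import all_boot all_order all_algebra.
Set Implicit Arguments. Unset Strict Implicit. Unset Printing Implicit Defensive.
Import Order.TTheory GRing.Theory Num.Theory.
Local Open Scope ring_scope.

Section Instance.
Variables (R : rcfType) (m : nat) (eps gam : R) (X : 'I_m -> bool).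

(* first half: paper index i <= m/2  <->  ordinal i < m/2 *)
Definition first_half (i : 'I_m) : bool := (i < m %/ 2)%N.

Definition mu_a (i : 'I_m) : R :=
  if first_half i then (if X i then 1/2 + eps else 1/2 - eps)
  else (if X i then 1/2 + gam else 1/2 - gam).

Definition mu_b (i : 'I_m) : R :=
  if first_half i then (if X i then 1/2 - eps else 1/2 + eps)
  else (if X i then 1/2 + gam else 1/2 - gam).

(* allocation: Aa is agent a's bundle, agent b gets the complement ~: Aa *)
Variable Aa : {set 'I_m}.

Definition envy_ab : R :=
  \sum_(i in ~: Aa) mu_a i - \sum_(i in Aa) mu_a i.
Definition envy_ba : R :=
  \sum_(i in Aa) mu_b i - \sum_(i in ~: Aa) mu_b i.
Definition envy : R := Num.max envy_ab envy_ba.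

Definition Xhat (i : 'I_m) : bool := i \in Aa.

Definition dH_half : nat := #|[set i : 'I_m | first_half i & X i != Xhat i]|.

Definition Ahat_eps : {set 'I_m} := [set i : 'I_m | first_half i & Xhat i].
Definition Bhat_eps : {set 'I_m} := [set i : 'I_m | first_half i & ~~ Xhat i].

Definition S (i : 'I_m) : R := if i \in Aa then 1 else -1.

Definition V_gam : R := \sum_(i : 'I_m | ~~ first_half i) S i * mu_a i.

End Instance.

(* Summing item by item, both envies consist of the same two parts with
   opposite relative signs: envy(a->b) = -(balance + match_bonus) and
   envy(b->a) = balance - match_bonus, where match_bonus is eps times
   (agreements - disagreements) of the allocation with X on the first half.
   Hence envy = |balance| - match_bonus.  The Hamming hypothesis rewrites to
   match_bonus < K gam sqrt m <= |balance|. *)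
From mathcomp Require Import all_boot all_order all_algebra.
From mathcomp Require Import ring.
Set Implicit Arguments. Unset Strict Implicit. Unset Printing Implicit Defensive.
Import Order.TTheory GRing.Theory Num.Theory.
Local Open Scope ring_scope.

Lemma card_ltn_ord m k : (k <= m)%N -> #|[set i : 'I_m | (i < k)%N]| = k.
Proof.
move=> le_km; rewrite -sum1_card (eq_bigl (fun i : 'I_m => (i < k)%N)) => [|i].
  by rewrite (big_ord_narrow le_km) sum1_card card_ord.
by rewrite inE.
Qed.

Lemma card_first_half m : #|[set i : 'I_m | first_half i]| = (m %/ 2)%N.
Proof. exact/card_ltn_ord/leq_div. Qed.

Lemma natr_cardE (R : pzSemiRingType) (T : finType) (A : {pred T}) :
  (#|A|%:R : R) = \sum_i (if i \in A then 1 else 0).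
Proof. by rewrite -big_mkcond sumr_const. Qed.

Lemma maxr_oppDB (R : realDomainType) (a b : R) :
  Num.max (- (a + b)) (a - b) = `|a| - b.
Proof. by rewrite opprD -addr_maxl maxNr. Qed.

Section EnvyDecomposition.
Variables (R : rcfType) (m : nat) (eps gam : R) (X : 'I_m -> bool).
Variable Aa : {set 'I_m}.

Definition balance : R :=
  (1/2) * ((#|Ahat_eps Aa|)%:R - (#|Bhat_eps Aa|)%:R) + V_gam eps gam X Aa.

Definition match_bonus : R :=
  eps * ((#|[set i : 'I_m | first_half i]|)%:R - 2 * (dH_half X Aa)%:R).

Lemma envy_abE : envy_ab eps gam X Aa = - (balance + match_bonus).
Proof.
rewrite /envy_ab /balance /match_bonus /V_gam /dH_half !natr_cardE.
rewrite !(big_mkcond (fun i => i \in _)) (big_mkcond (fun i => ~~ _)) /=.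
rewrite !mulr_sumr -!sumrB !mulr_sumr -!big_split -sumrN; apply: eq_bigr => i _.
rewrite in_setC !inE /Xhat /S /mu_a.
by case: (first_half i); case: (X i); case: (i \in Aa) => /=; ring.
Qed.

Lemma envy_baE : envy_ba eps gam X Aa = balance - match_bonus.
Proof.
rewrite /envy_ba /balance /match_bonus /V_gam /dH_half !natr_cardE.
rewrite !(big_mkcond (fun i => i \in _)) (big_mkcond (fun i => ~~ _)) /=.
rewrite !mulr_sumr -!sumrB !mulr_sumr -!big_split -sumrB; apply: eq_bigr => i _.
rewrite in_setC !inE /Xhat /S /mu_a /mu_b.
by case: (first_half i); case: (X i); case: (i \in Aa) => /=; ring.
Qed.

Lemma envyE : envy eps gam X Aa = `|balance| - match_bonus.
Proof. by rewrite /envy envy_abE envy_baE maxr_oppDB. Qed.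

End EnvyDecomposition.

Theorem lemma23 (R : rcfType) (m : nat) (eps gam : R) (X : 'I_m -> bool)
    (Aa : {set 'I_m}) (K : R) :
  (4 %| m)%N ->
  0 < eps -> eps <= 1/2 -> 0 < gam -> gam <= 1/2 ->
  0 < K ->
  (dH_half X Aa)%:R > m%:R / 4 - K * gam * Num.sqrt (m%:R) / (2 * eps) ->
  `| (1/2) * ((#|Ahat_eps Aa|)%:R - (#|Bhat_eps Aa|)%:R) + V_gam eps gam X Aa |
    >= K * gam * Num.sqrt (m%:R) ->
  envy eps gam X Aa > 0.
Proof.
move=> four_dvd_m eps_gt0 _ _ _ _ dH_large balance_large.
set c := K * gam * _ in dH_large balance_large.
have half_m : ((m %/ 2)%N%:R : R) = m%:R / 2.
  by rewrite natf_div //; apply: dvdn_trans four_dvd_m.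
have bonus_eq : match_bonus eps X Aa = (m%:R / 4 - (dH_half X Aa)%:R) * (2 * eps).
  by rewrite /match_bonus card_first_half half_m; field.
have bonus_small : match_bonus eps X Aa < c.
  by rewrite bonus_eq -ltr_pdivlMr ?mulr_gt0 // ltrBlDl addrC -ltrBlDl.
by rewrite envyE subr_gt0 (lt_le_trans bonus_small).
Qed.
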